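(* Let $K$ be either $\{1,2,3\}$ or $\{1,2,4\}$. The set of all groupoid identities $p=q$ satisfying the following conditions forms a basis for $\Sigma_K$. Every variable $x$ occurring in $p$ or $q$ either occurs exactly once in $p$ and exactly once in $q$, or occurs exactly twice in $p$ and exactly twice in $q$. If $x$ occurs exactly once in both $p$ and $q$, then the color of $x$ is the same in $p$ and in $q$. If $x$ occurs twice, then: for $K=\{1,2,3\}$, its two occurrences have colors $\alpha$ and $\beta$ in one of the terms and colors $\gamma$ and $1$ in the other; for $K=\{1,2,4\}$, its two occurrences have colors $\alpha$ and $\gamma$ in one of the terms and colors $\beta$ and $1$ in the other.
   Context: Let $f_1(x,y)=x+y$, $f_2(x,y)=x-y$, $f_3(x,y)=-x+y$, $f_4(x,y)=-x-y$ on $\mathbb{Z}$. For $K\subseteq\{1,2,3,4\}$, $\Sigma_K$ is the set of groupoid identities satisfied in $\mathbb{Z}$ by $f_k$ for every $k\in K$. Let $\mathbf{KL}=\{1,\alpha,\beta,\gamma\}$ be the Klein 4-group ($\alpha^2=\beta^2=1$, $\alpha\beta=\gamma$). The color of an occurrence of a variable in a term $p$ is the element of $\mathbf{KL}$ obtained by following the path from the whole term down to that occurrence, starting with $1$ and multiplying by $\alpha$ each time one passes to the left factor of a product and by $\beta$ each time one passes to the right factor. A basis for $\Sigma_K$ is a set of identities whose equational consequences are exactly $\Sigma_K$. *)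

From mathcomp Require Import all_boot all_algebra.
Set Implicit Arguments. Unset Strict Implicit. Unset Printing Implicit Defensive.
Import GRing.Theory.
Local Open Scope ring_scope.

Inductive term : Type :=
| Var of nat
| Op of term & term.

Fixpoint vars (t : term) : seq nat :=
  match t with Var x => [:: x] | Op l r => vars l ++ vars r end.

Fixpoint subst (s : nat -> term) (t : term) : term :=
  match t with Var x => s x | Op l r => Op (subst s l) (subst s r) end.

Definition fop (k : nat) (x y : int) : int :=
  match k with
  | 1%N => x + y
  | 2%N => x - y
  | 3%N => - x + y
  | 4%N => - x - y
  | _ => 0
  end.

Fixpoint eval (k : nat) (v : nat -> int) (t : term) : int :=
  match t with Var x => v x | Op l r => fop k (eval k v l) (eval k v r) end.

Definition Sigma (K : seq nat) (p q : term) : Prop :=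
  forall k, k \in K -> forall v : nat -> int, eval k v p = eval k v q.

Inductive derivable (E : term -> term -> Prop) : term -> term -> Prop :=
| der_ax p q (s : nat -> term) : E p q -> derivable E (subst s p) (subst s q)
| der_refl p : derivable E p p
| der_sym p q : derivable E p q -> derivable E q p
| der_trans p q r : derivable E p q -> derivable E q r -> derivable E p r
| der_op p1 p2 q1 q2 : derivable E p1 q1 -> derivable E p2 q2 ->
    derivable E (Op p1 p2) (Op q1 q2).

Definition is_basis (B S : term -> term -> Prop) : Prop :=
  forall p q, derivable B p q <-> S p q.

Definition klein := (bool * bool)%type.
Definition kmul (a b : klein) : klein := (xorb a.1 b.1, xorb a.2 b.2).
Definition k1 : klein := (false, false).
Definition kalpha : klein := (true, false).
Definition kbeta : klein := (false, true).
Definition kgamma : klein := (true, true).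

(* colors of the occurrences of x in t (left to right), the path color
   accumulated so far being c *)
Fixpoint occ_colors (x : nat) (c : klein) (t : term) : seq klein :=
  match t with
  | Var y => if y == x then [:: c] else [::]
  | Op l r => occ_colors x (kmul c kalpha) l ++ occ_colors x (kmul c kbeta) r
  end.

Definition colors (x : nat) (t : term) : seq klein := occ_colors x k1 t.

Definition basis_cond (a b c d : klein) (p q : term) : Prop :=
  forall x, x \in vars p ++ vars q ->
    (exists col, colors x p = [:: col] /\ colors x q = [:: col]) \/
    (size (colors x p) = 2%N /\ size (colors x q) = 2%N /\
      ((perm_eq (colors x p) [:: a; b] /\ perm_eq (colors x q) [:: c; d]) \/
       (perm_eq (colors x p) [:: c; d] /\ perm_eq (colors x q) [:: a; b]))).

Definition basis123 : term -> term -> Prop := basis_cond kalpha kbeta kgamma k1.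
Definition basis124 : term -> term -> Prop := basis_cond kalpha kgamma kbeta k1.

From mathcomp Require Import all_boot all_algebra zify.

(* Each f_k is linear, f_k x y = chi_k(alpha) x + chi_k(beta) y, for a character
   chi_k of the Klein group KL (f_1,...,f_4 realise its four characters).  Hence
   f_k evaluates a term to the sum of chi_k(colour) * v(variable) over its leaves,
   and p = q holds for every f_k, k in K, iff for each variable x the colour
   multisets of x in p and in q have the same sums under the three characters of
   K.  For K = {1,2,3} the common kernel of these characters is spanned by
   gamma + 1 - alpha - beta, so the two multisets differ by m copies of
   {gamma, 1} on one side against m copies of {alpha, beta} on the other; for
   K = {1,2,4} the kernel is spanned by beta + 1 - alpha - gamma.  The basis
   identities satisfy this.  Conversely such an identity p = q is a substitution
   instance of a single basis identity, obtained by renaming the occurrences of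
   every x apart: occurrences of equal colour in p and q receive a common fresh
   variable occurring once on each side, and each surplus pair of colours on one
   side receives a common fresh variable with a surplus pair on the other. *)

Set Implicit Arguments. Unset Strict Implicit. Unset Printing Implicit Defensive.
Import GRing.Theory.
Local Open Scope ring_scope.

Fixpoint colored_leaves (c : klein) (t : term) : seq (nat * klein) :=
  match t with
  | Var x => [:: (x, c)]
  | Op l r => colored_leaves (kmul c kalpha) l ++ colored_leaves (kmul c kbeta) r
  end.

Lemma map_fst_colored_leaves c t : map fst (colored_leaves c t) = vars t.
Proof. by elim: t c => [x|l IHl r IHr] c //=; rewrite map_cat IHl IHr. Qed.

Lemma occ_colors_leaves x c t :
  occ_colors x c t = [seq l.2 | l <- colored_leaves c t & l.1 == x].
Proof.
elim: t c => [y|l IHl r IHr] c /=; last by rewrite filter_cat map_cat IHl IHr.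
by case: (y == x).
Qed.

Definition chi (k : nat) (c : klein) : int :=
  match k with
  | 1%N => 1
  | 2%N => if c.2 then -1 else 1
  | 3%N => if c.1 then -1 else 1
  | 4%N => if xorb c.1 c.2 then -1 else 1
  | _ => 0
  end.

Lemma chi_mul k c e : chi k (kmul c e) = chi k c * chi k e.
Proof. by case: c e => [[] []] [[] []]; do 5?case: k => [|k]. Qed.

Section Linearization.

Variable k : nat.
Hypothesis k_op : k \in [:: 1; 2; 3; 4]%N.

Lemma chi_k1 : chi k k1 = 1.
Proof. by move: k_op; rewrite !inE => /or4P [] /eqP ->. Qed.

Lemma fopE a b : fop k a b = chi k kalpha * a + chi k kbeta * b.
Proof. by move: k_op; rewrite !inE => /or4P [] /eqP -> /=; rewrite ?mul1r ?mulN1r. Qed.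

Lemma eval_colored_leaves v c t :
  chi k c * eval k v t = \sum_(l <- colored_leaves c t) chi k l.2 * v l.1.
Proof.
elim: t c => [x|l IHl r IHr] c /=; first by rewrite big_seq1.
by rewrite big_cat -IHl -IHr fopE !chi_mul mulrDr !mulrA.
Qed.

Lemma eval_leaves v t :
  eval k v t = \sum_(l <- colored_leaves k1 t) chi k l.2 * v l.1.
Proof. by rewrite -eval_colored_leaves chi_k1 mul1r. Qed.

Lemma eval_indicator x t :
  eval k (fun y => (y == x)%:R) t = \sum_(c <- colors x t) chi k c.
Proof.
rewrite eval_leaves /colors occ_colors_leaves big_map big_filter [RHS]big_mkcond.
by apply: eq_bigr => -[y c] _ /=; case: (y == x); rewrite ?mulr1 ?mulr0.
Qed.

End Linearization.

Lemma eval_subst k v s t :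
  eval k v (subst s t) = eval k (fun x => eval k v (s x)) t.
Proof. by elim: t => //= l -> r ->. Qed.

Lemma derivable_Sigma (B : term -> term -> Prop) K :
  (forall p q, B p q -> Sigma K p q) -> forall p q, derivable B p q -> Sigma K p q.
Proof.
move=> BK p q; elim=> {p q}.
- by move=> p q s /BK Kpq k kK v; rewrite !eval_subst Kpq.
- by [].
- by move=> p q _ Kpq k kK v; rewrite Kpq.
- by move=> p q r _ Kpq _ Kqr k kK v; rewrite Kpq // Kqr.
- by move=> p1 p2 q1 q2 _ K1 _ K2 k kK v /=; rewrite K1 // K2.
Qed.

Lemma big_group_fst (I J : eqType) (R : nmodType) (L : seq (I * J)) (U : seq I)
    (F : I -> J -> R) :
  uniq U -> {subset map fst L <= U} ->
  \sum_(l <- L) F l.1 l.2 = \sum_(x <- U) \sum_(c <- [seq l.2 | l <- L & l.1 == x]) F x c.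
Proof.
move=> uU; elim: L => [|[y c] L IHL] LU.
  by rewrite big_nil big1 // => x _; rewrite big_nil.
rewrite big_cons IHL; last by move=> z zL; apply: LU; rewrite inE zL orbT.
have yU : y \in U by apply: LU; rewrite inE eqxx.
rewrite (bigD1_seq y) //= [in RHS](bigD1_seq y) //= eqxx big_cons /= addrA.
by congr (_ + _); apply: eq_bigr => x /negbTE xy /=; rewrite eq_sym xy.
Qed.

Lemma Sigma_basis_cond (a b c d : klein) K :
  {subset K <= [:: 1; 2; 3; 4]%N} ->
  (forall k, k \in K -> chi k a + chi k b = chi k c + chi k d) ->
  forall p q, basis_cond a b c d p q -> Sigma K p q.
Proof.
move=> Kop chiK p q pq k kK v; rewrite !eval_leaves ?Kop //.
pose U := undup (vars p ++ vars q).
have pU : {subset vars p <= U} by move=> x xp; rewrite mem_undup mem_cat xp.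
have qU : {subset vars q <= U} by move=> x xq; rewrite mem_undup mem_cat xq orbT.
rewrite !(big_group_fst (fun x c => chi k c * v x) (undup_uniq (vars p ++ vars q)));
  rewrite ?map_fst_colored_leaves //.
rewrite big_seq [RHS]big_seq; apply: eq_bigr => x; rewrite mem_undup => xpq.
rewrite -!occ_colors_leaves -!/(colors x _).
have sum2 s s' : perm_eq s [:: a; b] -> perm_eq s' [:: c; d] ->
    \sum_(e <- s) chi k e * v x = \sum_(e <- s') chi k e * v x.
  move=> ab cd; rewrite (perm_big _ ab) (perm_big _ cd) !big_cons !big_nil.
  by rewrite /= !addr0 -!mulrDl chiK.
case: (pq x xpq) => [[col [-> ->]] // | [_ [_ [[ab cd] | [cd ab]]]]].
- exact: sum2.
- by symmetry; apply: sum2.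
Qed.

Lemma big_count_mem (I : eqType) (R : nmodType) (r s : seq I) (F : I -> R) :
  uniq r -> {subset s <= r} -> \sum_(i <- s) F i = \sum_(i <- r) F i *+ count_mem i s.
Proof.
move=> ur; elim: s => [|j s IHs] sr.
  by rewrite big_nil big1 // => i _; rewrite mulr0n.
rewrite big_cons IHs; last by move=> i si; apply: sr; rewrite inE si orbT.
rewrite (bigD1_seq j) ?sr ?mem_head //= [RHS](bigD1_seq j) ?sr ?mem_head //=.
rewrite eqxx mulrnDr addrA; congr (_ + _).
by apply: eq_bigr => i /negbTE ji; rewrite eq_sym ji.
Qed.

Definition kleins : seq klein := [:: k1; kalpha; kbeta; kgamma].

Definition cnt (t : term) (x : nat) (c : klein) : nat := count_mem c (colors x t).

Lemma Sigma_cnt K p q : Sigma K p q -> forall k x,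
  k \in [:: 1; 2; 3; 4]%N -> k \in K ->
  \sum_(c <- kleins) chi k c *+ cnt p x c = \sum_(c <- kleins) chi k c *+ cnt q x c.
Proof.
move=> Kpq k x k_op kK; have sub t : {subset colors x t <= kleins} by case=> [[] []].
have := Kpq k kK (fun y => (y == x)%:R).
by rewrite !eval_indicator // !(big_count_mem _ _ (sub _)).
Qed.

Definition surplus (p q : term) (x : nat) (c : klein) : nat := (cnt p x c - cnt q x c)%N.

Definition balanced (a b c d : klein) (p q : term) : Prop :=
  forall x, exists m1 m2 : nat, (m1 = 0 \/ m2 = 0)%N /\ forall col,
    surplus p q x col = (if col \in [:: c; d] then m1 else m2) /\
    surplus q p x col = (if col \in [:: a; b] then m1 else m2).

Lemma Sigma123_balanced p q :
  Sigma [:: 1; 2; 3]%N p q -> balanced kalpha kbeta kgamma k1 p q.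
Proof.
move=> Kpq x.
have := @Sigma_cnt _ p q Kpq 1%N x isT isT.
have := @Sigma_cnt _ p q Kpq 2%N x isT isT.
have := @Sigma_cnt _ p q Kpq 3%N x isT isT.
rewrite /= !big_cons !big_nil /= => e3 e2 e1.
exists (surplus p q x kgamma), (surplus p q x kalpha); rewrite /surplus.
split; first lia.
by case=> [[] []]; rewrite /k1 /kalpha /kbeta /kgamma /= in e1 e2 e3 *; split; lia.
Qed.

Lemma Sigma124_balanced p q :
  Sigma [:: 1; 2; 4]%N p q -> balanced kalpha kgamma kbeta k1 p q.
Proof.
move=> Kpq x.
have := @Sigma_cnt _ p q Kpq 1%N x isT isT.
have := @Sigma_cnt _ p q Kpq 2%N x isT isT.
have := @Sigma_cnt _ p q Kpq 4%N x isT isT.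
rewrite /= !big_cons !big_nil /= => e4 e2 e1.
exists (surplus p q x kbeta), (surplus p q x kalpha); rewrite /surplus.
split; first lia.
by case=> [[] []]; rewrite /k1 /kalpha /kbeta /kgamma /= in e1 e2 e4 *; split; lia.
Qed.

Fixpoint annotate (T : eqType) (s : seq T) : seq (T * nat) :=
  if s is e :: s' then (e, count_mem e s') :: annotate s' else [::].

Lemma map_fst_annotate (T : eqType) (s : seq T) : map fst (annotate s) = s.
Proof. by elim: s => //= e s ->. Qed.

Lemma mem_annotate (T : eqType) (s : seq T) e i :
  ((e, i) \in annotate s) = (i < count_mem e s)%N.
Proof.
elim: s => [|e' s IHs] //=; rewrite inE IHs xpair_eqE.
case: (eqVneq e e') => [->|] /=; last by rewrite add0n.
by rewrite add1n ltnS [RHS]leq_eqVlt.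
Qed.

Lemma annotate_uniq (T : eqType) (s : seq T) : uniq (annotate s).
Proof. by elim: s => //= e s ->; rewrite mem_annotate ltnn. Qed.

Fixpoint relabel (t : term) (s : seq nat) : term :=
  match t with
  | Var _ => Var (head 0%N s)
  | Op l r => Op (relabel l (take (size (vars l)) s)) (relabel r (drop (size (vars l)) s))
  end.

Lemma colored_leaves_relabel (X : Type) c t (A : seq X) (f : X -> nat) (g : X -> klein) :
  map g A = map snd (colored_leaves c t) ->
  colored_leaves c (relabel t (map f A)) = map (fun z => (f z, g z)) A.
Proof.
elim: t c A => [x|l IHl r IHr] c A /=.
  by case: A => [|z [|z' A]] //= [->].
rewrite map_cat => gA.
have size_l : size (vars l) = size (map snd (colored_leaves (kmul c kalpha) l)).
  by rewrite size_map -(map_fst_colored_leaves (kmul c kalpha)) size_map.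
rewrite -map_take -map_drop IHl ?IHr -?map_cat ?cat_take_drop //.
  by rewrite map_drop gA size_l drop_size_cat.
by rewrite map_take gA size_l take_size_cat.
Qed.

Lemma subst_relabel t s (src : nat -> nat) :
  map src s = vars t -> subst (fun y => Var (src y)) (relabel t s) = t.
Proof.
elim: t s => [x|l IHl r IHr] s /=.
  by case: s => [|y [|y' s]] //= [->].
move=> st; rewrite IHl ?IHr //.
  by rewrite map_drop st drop_size_cat.
by rewrite map_take st take_size_cat.
Qed.

(* The new name of the occurrence [z = (x, c, i)] of [x] in [p], where [s x c] is
   the surplus of colour [c] over [q].  A surplus occurrence becomes [(x, None, i)];
   in a balanced pair this name ends up on one occurrence of each colour of the
   surplus pair in [p] and of the complementary pair in [q].  Any other occurrence
   becomes [(x, Some c, j)], shared with exactly one occurrence of colour [c] in [q]. *)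
Definition occ_var (s : nat -> klein -> nat) (z : nat * klein * nat) : nat :=
  let: (x, c, i) := z in
  if (i < s x c)%N then pickle (x, @None klein, i) else pickle (x, Some c, (i - s x c)%N).

Definition occ_src (y : nat) : nat :=
  if @unpickle (nat * option klein * nat)%type y is Some (x, _, _) then x else 0%N.

Lemma occ_src_var s z : occ_src (occ_var s z) = z.1.1.
Proof. by case: z => [[x c] i]; rewrite /occ_var /occ_src; case: ifP; rewrite pickleK. Qed.

Lemma occ_var_single s z x c j :
  (occ_var s z == pickle (x, Some c, j)) = (z == (x, c, j + s x c)%N).
Proof.
case: z => [[x' c'] i] /=; rewrite !xpair_eqE.
case: ltnP => i_s; rewrite (inj_eq (pcan_inj pickleK)) !xpair_eqE /= ?andbF.
  case: (eqVneq x' x) => [<-|] //=; case: (eqVneq c' c) => [<-|] //=.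
  by apply/esym/eqP => i_eq; move: i_s; rewrite i_eq ltnNge leq_addl.
have -> : (Some c' == Some c) = (c' == c) by [].
case: (eqVneq x' x) => [<-|] //=; case: (eqVneq c' c) => [<-|] //=.
by apply/eqP/eqP; lia.
Qed.

Lemma occ_var_pair s z x i :
  (occ_var s z == pickle (x, @None klein, i)) =
  [&& z.1.1 == x, z.2 == i & (i < s z.1.1 z.1.2)%N].
Proof.
case: z => [[x' c'] i'] /=.
case: ltnP => i_s; rewrite (inj_eq (pcan_inj pickleK)) !xpair_eqE /= ?andbF //.
  by case: (eqVneq i' i) => [<-|]; rewrite ?i_s ?andbF ?andbT.
by case: (eqVneq i' i) => [<-|]; rewrite ?andbF //= ltnNge i_s andbF.
Qed.

Definition split_term (p q : term) : term :=
  relabel p (map (occ_var (surplus p q)) (annotate (colored_leaves k1 p))).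

Lemma colored_leaves_split_term p q : colored_leaves k1 (split_term p q) =
  map (fun z => (occ_var (surplus p q) z, z.1.2)) (annotate (colored_leaves k1 p)).
Proof.
apply: colored_leaves_relabel.
by rewrite -[in RHS](map_fst_annotate (colored_leaves k1 p)) -map_comp.
Qed.

Lemma vars_split_term p q :
  vars (split_term p q) = map (occ_var (surplus p q)) (annotate (colored_leaves k1 p)).
Proof. by rewrite -(map_fst_colored_leaves k1) colored_leaves_split_term -map_comp. Qed.

Lemma subst_split_term p q : subst (fun y => Var (occ_src y)) (split_term p q) = p.
Proof.
apply: subst_relabel; rewrite -map_comp -(map_fst_colored_leaves k1).
rewrite -[in RHS](map_fst_annotate (colored_leaves k1 p)) -map_comp.
by apply: eq_map => z /=; rewrite occ_src_var.
Qed.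

Lemma cnt_leaves t x c : cnt t x c = count_mem (x, c) (colored_leaves k1 t).
Proof.
rewrite /cnt /colors occ_colors_leaves count_map count_filter.
by apply: eq_count => -[y e] /=; rewrite xpair_eqE andbC.
Qed.

Lemma count_colors_split_term p q y c :
  count_mem c (colors y (split_term p q)) =
  count (fun z => (occ_var (surplus p q) z == y) && (z.1.2 == c))
        (annotate (colored_leaves k1 p)).
Proof.
rewrite /colors occ_colors_leaves colored_leaves_split_term.
rewrite count_map count_filter count_map.
by apply: eq_count => z /=; rewrite andbC.
Qed.

Lemma count_uniq_pred1 (T : eqType) (s : seq T) z0 (b : bool) (P : pred T) :
  uniq s -> (forall z, P z = (z == z0) && b) -> count P s = b && (z0 \in s).
Proof.
move=> us Pz; rewrite (eq_count Pz); case: b {Pz} => /=.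
  by rewrite -count_uniq_mem //; apply: eq_count => z; rewrite andbT.
by rewrite (eq_count (fun z => andbF _)) count_pred0.
Qed.

Lemma count_colors_pair_var p q x i c :
  count_mem c (colors (pickle (x, @None klein, i)) (split_term p q)) =
  (i < surplus p q x c)%N.
Proof.
rewrite count_colors_split_term (@count_uniq_pred1 _ _ (x, c, i) (i < surplus p q x c)%N).
- rewrite mem_annotate -cnt_leaves; case: ltnP => //= i_s.
  by rewrite (leq_trans i_s (leq_subr _ _)).
- exact: annotate_uniq.
move=> [[x' c'] i']; rewrite occ_var_pair /= !xpair_eqE.
by case: (eqVneq x' x) => [<-|]; case: (eqVneq i' i) => [<-|];
  case: (eqVneq c' c) => [<-|]; rewrite /= ?andbF ?andbT.
Qed.

Lemma count_colors_single_var p q x c j e :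
  count_mem e (colors (pickle (x, Some c, j)) (split_term p q)) =
  (c == e) && (j + surplus p q x c < cnt p x c)%N.
Proof.
rewrite count_colors_split_term (@count_uniq_pred1 _ _ (x, c, j + surplus p q x c)%N (c == e)).
- by rewrite mem_annotate -cnt_leaves.
- exact: annotate_uniq.
move=> z; rewrite occ_var_single.
by case: (eqVneq z (x, c, j + surplus p q x c)%N) => [->|].
Qed.

Lemma perm_eq_pair_count (u w : klein) s :
  u != w -> (forall e, count_mem e s = (e \in [:: u; w])) -> perm_eq s [:: u; w].
Proof.
move=> uw s_uw; apply/allP => e _; apply/eqP.
by rewrite s_uw count_uniq_mem //= inE uw.
Qed.

Lemma seq1_count (u : klein) s : (forall e, count_mem e s = (u == e)) -> s = [:: u].
Proof.
move=> s_u; apply: perm_small_eq => //; apply/allP => e _; apply/eqP.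
by rewrite s_u /= addn0.
Qed.

Definition var_cond (a b c d : klein) (p q : term) (x : nat) : Prop :=
  (exists col, colors x p = [:: col] /\ colors x q = [:: col]) \/
  (size (colors x p) = 2%N /\ size (colors x q) = 2%N /\
    ((perm_eq (colors x p) [:: a; b] /\ perm_eq (colors x q) [:: c; d]) \/
     (perm_eq (colors x p) [:: c; d] /\ perm_eq (colors x q) [:: a; b]))).

Lemma var_cond_sym a b c d p q x : var_cond a b c d p q x -> var_cond a b c d q p x.
Proof.
case=> [[col [pc qc]] | [size_p [size_q [[pab qcd] | [pcd qab]]]]].
- by left; exists col.
- by right; do 2 split=> //; right.
- by right; do 2 split=> //; left.
Qed.

Section SplitTerm.

Variables a b c d : klein.
Hypotheses (ab : a != b) (cd : c != d).
Hypothesis ab_cd : forall e, (e \in [:: a; b]) = (e \notin [:: c; d]).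

Lemma split_term_var_cond p q :
  balanced a b c d p q -> forall y, y \in vars (split_term p q) ->
  var_cond a b c d (split_term p q) (split_term q p) y.
Proof.
move=> bal y; rewrite vars_split_term => /mapP [[[x col] i] zp ->] /=.
rewrite mem_annotate -cnt_leaves in zp.
have [m1 [m2 [m0 surplusE]]] := bal x.
have pair_perm u w u' w' : u != w -> u' != w' ->
    (forall e, (i < surplus p q x e)%N = (e \in [:: u; w])) ->
    (forall e, (i < surplus q p x e)%N = (e \in [:: u'; w'])) ->
    perm_eq (colors (pickle (x, @None klein, i)) (split_term p q)) [:: u; w] /\
    perm_eq (colors (pickle (x, @None klein, i)) (split_term q p)) [:: u'; w'].
  move=> uw uw' sp sq.
  by split; apply: perm_eq_pair_count => // e; rewrite count_colors_pair_var ?sp ?sq.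
case: ltnP => i_s.
- right; have [surplus_col _] := surplusE col; rewrite surplus_col in i_s.
  set Cp := colors _ (split_term p q) in pair_perm *.
  set Cq := colors _ (split_term q p) in pair_perm *.
  have [[Pab Qcd] | [Pcd Qab]] : perm_eq Cp [:: a; b] /\ perm_eq Cq [:: c; d] \/
                                 perm_eq Cp [:: c; d] /\ perm_eq Cq [:: a; b].
  + case: m0 => m0; [left | right]; apply: pair_perm => // e;
      have [Ep Eq] := surplusE e; rewrite ?Ep ?Eq; move: (ab_cd e) i_s; rewrite m0;
      by case: (col \in _); case: (e \in [:: a; b]); case: (e \in [:: c; d]) => // _ ->.
  + by rewrite (perm_size Pab) (perm_size Qcd); do 2 split=> //; left.
  + by rewrite (perm_size Pcd) (perm_size Qab); do 2 split=> //; right.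
left; exists col; split; apply: seq1_count => e; rewrite count_colors_single_var;
  case: (col == e) => //=; rewrite /surplus in i_s *; lia.
Qed.

Lemma derivable_of_balanced p q :
  balanced a b c d p q -> balanced a b c d q p -> derivable (basis_cond a b c d) p q.
Proof.
move=> bpq bqp.
have cond : basis_cond a b c d (split_term p q) (split_term q p).
  move=> y; rewrite mem_cat => /orP [yp | yq]; first exact: split_term_var_cond.
  by apply: var_cond_sym; apply: split_term_var_cond.
by have := der_ax (fun y => Var (occ_src y)) cond; rewrite !subst_split_term.
Qed.

End SplitTerm.

Lemma basis_cond_is_basis (a b c d : klein) K :
  a != b -> c != d -> (forall e, (e \in [:: a; b]) = (e \notin [:: c; d])) ->
  {subset K <= [:: 1; 2; 3; 4]%N} ->
  (forall k, k \in K -> chi k a + chi k b = chi k c + chi k d) ->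
  (forall p q, Sigma K p q -> balanced a b c d p q) ->
  is_basis (basis_cond a b c d) (Sigma K).
Proof.
move=> ab cd ab_cd Kop chiK bal p q; split.
  by apply: derivable_Sigma; apply: Sigma_basis_cond.
move=> Kpq; apply: derivable_of_balanced => //; apply: bal => // k kK v.
by rewrite Kpq.
Qed.

Theorem lemma2p2 :
  is_basis basis123 (Sigma [:: 1; 2; 3]%N) /\
  is_basis basis124 (Sigma [:: 1; 2; 4]%N).
Proof.
split; apply: basis_cond_is_basis => //;
  try by [case=> [[] []] | move=> k; rewrite !inE => /or3P [] /eqP ->].
- exact: Sigma123_balanced.
- exact: Sigma124_balanced.
Qed.
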